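(* Let $G$ be a triadic simplicial complex, let $s$ be a labeling of the edges of $G$ by $\pm 1$, and let $\overline{s}$ be the configuration on the triadic dual $T_{3}(G)$ that places a ball on exactly those vertices of $T_{3}(G)$ corresponding to imbalanced triangles of $G$ under $s$. Then the nondeterministic triad dynamics on $G$ started from $s$ corresponds to the hyperedge switching process on $T_{3}(G)$ started from $\overline{s}$: flipping the sign of an edge $e$ of $G$ is a legal move of the triad dynamics if and only if choosing the hyperedge $l_{e}$ of $T_{3}(G)$ corresponding to $e$ is a legal move of the hyperedge switching process, and in that case the set of imbalanced triangles after the flip is exactly the set of vertices of $T_{3}(G)$ carrying a ball after switching $l_{e}$.
   Context: A triangle of a graph whose edges are labeled $\pm 1$ is balanced if the product of its three labels is $1$, imbalanced otherwise. Nondeterministic triad dynamics: at each step, for some imbalanced triangle $T$, the sign of an arbitrary edge of $T$ is changed (this may change the balance of other triangles containing that edge). A triadic simplicial complex is a graph in which every edge lies in some triangle. The triadic dual $T_{3}(G)$ is the hypergraph (self-loops, i.e. one-vertex hyperedges, allowed) whose vertices are the triangles of $G$ and which has, for each edge $e$ of $G$, a hyperedge $l_e$ consisting of all triangles of $G$ containing $e$ (so if $e$ lies in a unique triangle $T$, $l_e$ is a self-loop at $T$; a vertex may carry two self-loops). Hyperedge switching process on a hypergraph: some vertices carry a ball; at each step one chooses a hyperedge $C$ that contains at least one vertex carrying a ball (a self-loop at an occupied vertex qualifies), and then puts balls on all empty vertices of $C$ and removes the balls from all occupied vertices of $C$. *)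

From mathcomp Require Import all_boot all_algebra.
Set Implicit Arguments. Unset Strict Implicit. Unset Printing Implicit Defensive.
Import GRing.Theory.
Local Open Scope ring_scope.

Section Defs.
Variable V : finType.

Definition simple_graph (adj : rel V) : Prop :=
  symmetric adj /\ irreflexive adj.

Definition is_edge (adj : rel V) (e : {set V}) : bool :=
  [exists x, exists y, adj x y && (e == [set x; y])].

Definition is_triangle (adj : rel V) (t : {set V}) : bool :=
  [exists x, exists y, exists z,
     [&& adj x y, adj y z, adj x z & t == [set x; y; z]]].

Definition tri_edges (adj : rel V) (t : {set V}) : {set {set V}} :=
  [set f | is_edge adj f & f \subset t].

Definition triadic (adj : rel V) : Prop :=
  forall e, is_edge adj e -> exists t, is_triangle adj t && (e \subset t).

(* A +-1 labeling of the edges (values off edges are irrelevant). *)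
Definition pm1_labeling (adj : rel V) (s : {set V} -> int) : Prop :=
  forall e, is_edge adj e -> s e = 1 \/ s e = -1.

Definition balanced (adj : rel V) (s : {set V} -> int) (t : {set V}) : bool :=
  (\prod_(f in tri_edges adj t) s f) == 1.

Definition imbalanced_set (adj : rel V) (s : {set V} -> int) : {set {set V}} :=
  [set t | is_triangle adj t & ~~ balanced adj s t].

Definition flip (s : {set V} -> int) (e : {set V}) : {set V} -> int :=
  fun f => if f == e then - s e else s f.

Definition triad_legal (adj : rel V) (s : {set V} -> int) (e : {set V}) : Prop :=
  exists t, [&& is_triangle adj t, ~~ balanced adj s t & e \in tri_edges adj t].

Definition T3_vertices (adj : rel V) : {set {set V}} := [set t | is_triangle adj t].
Definition T3_hyperedge (adj : rel V) (e : {set V}) : {set {set V}} :=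
  [set t | is_triangle adj t & e \subset t].

Definition config_of (adj : rel V) (s : {set V} -> int) : {set {set V}} :=
  imbalanced_set adj s.
End Defs.

Definition hyper_legal (W : finType) (occ C : {set W}) : Prop :=
  exists v, (v \in C) && (v \in occ).
Definition hyper_switch (W : finType) (occ C : {set W}) : {set W} :=
  (occ :\: C) :|: (C :\: occ).

(* Under a +-1 labeling, flipping the sign of e negates the sign product of exactly the
   triangles containing e, i.e. the vertices of the hyperedge l_e.  So a triangle is
   imbalanced after the flip iff its imbalance differs from whether it contains e, which
   is the symmetric-difference rule of hyperedge switching.  Legality matches because
   "e lies in an imbalanced triangle" is "l_e contains an occupied vertex". *)
From mathcomp Require Import all_boot all_algebra.
Import GRing.Theory.
Local Open Scope ring_scope.

Lemma prod_pm1 (I : finType) (A : {pred I}) (F : I -> int) :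
  {in A, forall i, F i = 1 \/ F i = -1} ->
  \prod_(i in A) F i = 1 \/ \prod_(i in A) F i = -1.
Proof.
move=> F_pm1; apply: (big_ind (fun x : int => x = 1 \/ x = -1)) => //; first by left.
by move=> x y [->|->] [->|->]; rewrite ?mulr1 ?mul1r ?mulrNN; auto.
Qed.

Lemma in_hyper_switch (W : finType) (occ C : {set W}) (x : W) :
  (x \in hyper_switch occ C) = (x \in occ) (+) (x \in C).
Proof. by rewrite !inE; case: (x \in occ); case: (x \in C). Qed.

Section TriadDynamics.
Variables (V : finType) (adj : rel V).

Lemma prod_flip (s : {set V} -> int) (A : {set {set V}}) (e : {set V}) :
  \prod_(f in A) flip s e f = (-1) ^+ (e \in A) * \prod_(f in A) s f.
Proof.
have [eA | eNA] := boolP (e \in A).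
  rewrite (bigD1 e) //= [in RHS](bigD1 e) //= /flip eqxx expr1 mulN1r mulNr.
  by congr (- (_ * _)); apply: eq_bigr => f /andP [_ /negbTE ->].
rewrite expr0 mul1r; apply: eq_bigr => f fA; rewrite /flip.
by case: eqP => // fe; rewrite -fe fA in eNA.
Qed.

Lemma balanced_flip (s : {set V} -> int) (e t : {set V}) :
  pm1_labeling adj s -> is_edge adj e ->
  balanced adj (flip s e) t = balanced adj s t (+) (e \subset t).
Proof.
move=> s_pm1 e_edge; rewrite /balanced prod_flip inE e_edge /=.
have [-> | ->] : \prod_(f in tri_edges adj t) s f = 1 \/
                 \prod_(f in tri_edges adj t) s f = -1.
  by apply: prod_pm1 => f; rewrite inE => /andP [f_edge _]; apply: s_pm1.
all: by case: (e \subset t).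
Qed.

Lemma triad_legalP (s : {set V} -> int) (e : {set V}) :
  is_edge adj e ->
  triad_legal adj s e <-> hyper_legal (config_of adj s) (T3_hyperedge adj e).
Proof.
move=> e_edge; split=> -[t].
  rewrite inE => /and3P [t_tri t_imb /andP [_ e_sub]].
  by exists t; rewrite !inE t_tri t_imb e_sub.
rewrite !inE => /andP [/andP [t_tri e_sub] /andP [_ t_imb]].
by exists t; rewrite t_tri t_imb inE e_edge e_sub.
Qed.

End TriadDynamics.

Theorem lemma1 (V : finType) (adj : rel V) (s : {set V} -> int)
  (Hg : simple_graph adj) (Htri : triadic adj) (Hs : pm1_labeling adj s)
  (e : {set V}) (He : is_edge adj e) :
  (triad_legal adj s e <->
     hyper_legal (config_of adj s) (T3_hyperedge adj e)) /\
  (triad_legal adj s e ->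
     imbalanced_set adj (flip s e) =
       hyper_switch (config_of adj s) (T3_hyperedge adj e)).
Proof.
split; first exact: triad_legalP.
move=> _; apply/setP => t; rewrite in_hyper_switch !inE balanced_flip //.
by case: (is_triangle adj t); case: (balanced adj s t); case: (e \subset t).
Qed.
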